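(* Let $q$ be a prime power, let $m$ be a divisor of $n$ and set $s=n/m$. Let $\mathcal{F}$ be a flag of type $(ms_1,\ldots,ms_r)$ on $\mathbb{F}_{q^n}$ (with $1\le s_1<\cdots<s_r<s$) whose best friend is the subfield $\mathbb{F}_{q^m}$, and let $\beta\in\mathbb{F}_{q^n}^*$. Then $d_f(\mathrm{Orb}_\beta(\mathcal{F}))=0$ if and only if $\beta\in\mathbb{F}_{q^m}^*$. If $\beta\notin\mathbb{F}_{q^m}^*$, then $2m$ divides $d_f(\mathrm{Orb}_\beta(\mathcal{F}))$ and $$2m\le d_f(\mathrm{Orb}_\beta(\mathcal{F}))\le 2m\left(\sum_{s_i\le\lfloor s/2\rfloor}s_i+\sum_{s_i>\lfloor s/2\rfloor}(s-s_i)\right).$$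
   Context: A flag of type $(t_1,\ldots,t_r)$ on $\mathbb{F}_{q^n}$ is a sequence $(\mathcal{F}_1,\ldots,\mathcal{F}_r)$ of $\mathbb{F}_q$-subspaces with $\{0\}\subsetneq\mathcal{F}_1\subsetneq\cdots\subsetneq\mathcal{F}_r\subsetneq\mathbb{F}_{q^n}$ and $\dim_{\mathbb{F}_q}\mathcal{F}_i=t_i$. For $\beta\in\mathbb{F}_{q^n}^*$ of multiplicative order $|\beta|$, $\mathcal{F}\beta=(\mathcal{F}_1\beta,\ldots,\mathcal{F}_r\beta)$ with $\mathcal{U}\beta=\{u\beta:u\in\mathcal{U}\}$, and $\mathrm{Orb}_\beta(\mathcal{F})=\{\mathcal{F}\beta^j:0\le j\le|\beta|-1\}$. Subspace distance: $d_S(\mathcal{U},\mathcal{V})=\dim(\mathcal{U}+\mathcal{V})-\dim(\mathcal{U}\cap\mathcal{V})$; flag distance: $d_f(\mathcal{F},\mathcal{F}')=\sum_{i=1}^r d_S(\mathcal{F}_i,\mathcal{F}'_i)$. The minimum distance $d_f(\mathcal{C})$ of a set $\mathcal{C}$ of flags is the minimum of $d_f$ over pairs of distinct elements, and $d_f(\mathcal{C})=0$ if $|\mathcal{C}|=1$. A subfield $\mathbb{F}_{q^m}$ is a friend of $\mathcal{F}$ if every $\mathcal{F}_i$ is an $\mathbb{F}_{q^m}$-vector space; the best friend is the largest friend. *)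

From HB Require Import structures.
From mathcomp Require Import all_boot all_order all_algebra all_field.
Set Implicit Arguments. Unset Strict Implicit. Unset Printing Implicit Defensive.
Import GRing.Theory.
Local Open Scope ring_scope.

(* F plays the role of F_q (a finite field, hence q = #|F| is a prime power),
   L is a finite-dimensional field extension of F, i.e. L = F_{q^n} with
   n = \dim {:L}. *)

Section Flags.
Variables (F : finFieldType) (L : fieldExtType F).

(* multiplicative order of b : least k >= 1 with b ^+ k = 1 (searched up to
   q^n, which suffices for b <> 0 since b ^+ (q^n - 1) = 1) *)
Definition morder (b : L) : nat :=
  (find (fun k => b ^+ k.+1 == 1) (iota 0 (#|F| ^ \dim {:L})%N)).+1.

Definition vsmul (U : {vspace L}) (b : L) : {vspace L} := (amulr b @: U)%VS.

Definition dS (U V : {vspace L}) : nat := (\dim (U + V) - \dim (U :&: V))%N.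

Local Notation flag r := {ffun 'I_r -> {vspace L}}.

Definition is_flag_of_type (r : nat) (Fl : flag r) (t : 'I_r -> nat) : Prop :=
  [/\ forall i, \dim (Fl i) = t i,
      forall i, Fl i != 0%VS,
      forall i j : 'I_r, (i < j)%N -> (Fl i <= Fl j)%VS && (Fl i != Fl j)
    & forall i, Fl i != fullv].

Definition df (r : nat) (A B : flag r) : nat := (\sum_(i < r) dS (A i) (B i))%N.

Definition flagmul (r : nat) (Fl : flag r) (b : L) : flag r :=
  [ffun i => vsmul (Fl i) b].

Definition Orb (r : nat) (Fl : flag r) (b : L) : seq (flag r) :=
  [seq flagmul Fl (b ^+ j) | j <- iota 0 (morder b)].

(* minimum distance of a (finite) set of flags; 0 if there are no two
   distinct elements *)
Definition mindist (r : nat) (C : seq (flag r)) : nat :=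
  let D := [seq df p.1 p.2 | p <- [seq (x, y) | x <- C, y <- C] & p.1 != p.2] in
  foldr minn (head 0%N D) D.

(* K = F_{q^m} is a friend of Fl : every Fl_i is a K-vector space *)
Definition friend (r : nat) (Fl : flag r) (K : {subfield L}) : Prop :=
  forall i, (K * Fl i <= Fl i)%VS.

Definition best_friend (r : nat) (Fl : flag r) (K : {subfield L}) : Prop :=
  friend Fl K /\ forall K' : {subfield L}, friend Fl K' -> (\dim K' <= \dim K)%N.

End Flags.

Notation flag L r := {ffun 'I_r -> {vspace L}}.

From HB Require Import structures.
From mathcomp Require Import all_boot all_order all_algebra all_field zify.
Import GRing.Theory.
Local Open Scope ring_scope.

(* Multiplying by b != 0 is an F-linear automorphism of L commuting with the
   action of K, so every flag Fl b^j of the orbit is again a flag of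
   K-subspaces of the same type.  For K-subspaces U, V of equal dimension,
   d_S(U, V) = 2 (dim (U + V) - dim U) is a multiple of 2 dim K, and it is at
   most 2 min (dim U, n - dim U); applied to the pair (Fl, Fl b) this gives the
   upper bound.  Finally Fl b = Fl makes every Fl_i a module over K(b), so by
   maximality of the best friend the orbit is trivial exactly when b is in K. *)

Set Implicit Arguments.
Unset Strict Implicit.

Section Subspaces.
Variables (F : finFieldType) (L : fieldExtType F).
Implicit Types (U V : {vspace L}) (K : {subfield L}) (c : L).

Lemma mem_vsmul U c u : u \in U -> u * c \in vsmul U c.
Proof. by move=> uU; have := memv_img (amulr c) uU; rewrite lfunE. Qed.

Lemma vsmulP U c v : reflect (exists2 u, u \in U & v = u * c) (v \in vsmul U c).
Proof.
apply: (iffP idP) => [/memv_imgP[u uU ->]|[u uU ->]]; last exact: mem_vsmul.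
by exists u; rewrite ?lfunE.
Qed.

Lemma dim_vsmul U c : c != 0 -> \dim (vsmul U c) = \dim U.
Proof.
by move=> c0; apply: limg_dim_eq; rewrite (eqP (lker0_amulr _)) ?capv0 ?unitfE.
Qed.

Lemma prodv_vsmul K U c : (K * U <= U)%VS -> (K * vsmul U c <= vsmul U c)%VS.
Proof.
move=> /prodvP KU; apply/prodvP=> x _ xK /vsmulP[u uU ->].
by rewrite mulrA mem_vsmul // KU.
Qed.

Lemma vsmul_id K U c : (K * U <= U)%VS -> c \in K -> c != 0 -> vsmul U c = U.
Proof.
move=> /prodvP KU cK c0; apply/eqP; rewrite eqEsubv; apply/andP; split.
  by apply/subvP=> _ /vsmulP[u uU ->]; rewrite mulrC KU.
apply/subvP=> u uU; rewrite -[u](mulfVK c0) mem_vsmul //.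
by rewrite mulrC KU // rpredV.
Qed.

Lemma prodv_adjoin K U b :
  (K * U <= U)%VS -> vsmul U b = U -> (<<K; b>> * U <= U)%VS.
Proof.
move=> /prodvP KU bU; apply/prodvP=> _ u /Fadjoin_polyP[p pK ->] uU.
have bkU k w : w \in U -> b ^+ k * w \in U.
  elim: k w => [|k IHk] w wU; first by rewrite mul1r.
  by rewrite exprS -mulrA mulrC -bU mem_vsmul // IHk.
rewrite horner_coef mulr_suml; apply: memv_suml => k _.
by rewrite -mulrA KU ?bkU // (polyOverP pK).
Qed.

Lemma dS_eq0 U V : dS U V = 0%N -> U = V.
Proof.
rewrite /dS => /eqP; rewrite subn_eq0 => le_sum_cap.
have capE : (U :&: V)%VS = (U + V)%VS.
  by apply/eqP; rewrite eqEdim le_sum_cap andbT (subv_trans (capvSl _ _) (addvSl _ _)).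
apply/eqP; rewrite eqEsubv (subv_trans (addvSl U V)) -?capE ?capvSr //.
by rewrite (subv_trans (addvSr U V)) -?capE ?capvSl.
Qed.

Lemma dvdn_dS K U V : (K * U <= U)%VS -> (K * V <= V)%VS ->
  \dim U = \dim V -> (2 * \dim K %| dS U V)%N.
Proof.
move=> KU KV dimUV.
have KUV : (K * (U + V) <= U + V)%VS by rewrite prodvDr addvS.
have dS_sum : dS U V = (2 * (\dim (U + V) - \dim U))%N.
  by have := dimv_sum_cap U V; rewrite /dS; lia.
by rewrite dS_sum dvdn_pmul2l // dvdn_sub // field_module_dimS.
Qed.

Lemma dS_leq U V : \dim U = \dim V ->
  (dS U V <= 2 * minn (\dim U) (\dim {:L} - \dim U))%N.
Proof.
move=> dimUV; have := dimv_sum_cap U V; have := dimvS (subvf (U + V)).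
rewrite /dS; lia.
Qed.

End Subspaces.

Section Flags.
Variables (F : finFieldType) (L : fieldExtType F) (r : nat).
Implicit Types (A B Fl : flag L r) (K : {subfield L}) (b c : L).

Lemma flagmulE Fl c i : flagmul Fl c i = vsmul (Fl i) c.
Proof. by rewrite ffunE. Qed.

Lemma friend_flagmul Fl K c : friend Fl K -> friend (flagmul Fl c) K.
Proof. by move=> KFl i; rewrite flagmulE prodv_vsmul. Qed.

Lemma dim_flagmul Fl c i : c != 0 -> \dim (flagmul Fl c i) = \dim (Fl i).
Proof. by move=> c0; rewrite flagmulE dim_vsmul. Qed.

Lemma flagmul_id Fl K c : friend Fl K -> c \in K -> c != 0 -> flagmul Fl c = Fl.
Proof. by move=> KFl cK c0; apply/ffunP=> i; rewrite flagmulE (vsmul_id (KFl i)). Qed.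

Lemma best_friend_mem Fl K b : best_friend Fl K -> flagmul Fl b = Fl -> b \in K.
Proof.
case=> KFl K_max bFl.
have Kb_friend : friend Fl <<K; b>>%AS.
  by move=> i; rewrite prodv_adjoin // -flagmulE bFl.
have KbE : (K = <<K; b>>%AS :> {vspace L}).
  by apply/eqP; rewrite eqEdim subv_adjoin K_max.
by rewrite KbE memv_adjoin.
Qed.

Lemma df_eq0 A B : df A B = 0%N -> A = B.
Proof.
rewrite /df => /eqP; rewrite sum_nat_eq0 => /forallP dS0.
by apply/ffunP=> i; apply/dS_eq0/eqP/dS0.
Qed.

Lemma dvdn_df K A B : friend A K -> friend B K ->
  (forall i, \dim (A i) = \dim (B i)) -> (2 * \dim K %| df A B)%N.
Proof. by move=> KA KB dimAB; apply: dvdn_sum => i _; apply: dvdn_dS. Qed.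

Lemma df_leq A B : (forall i, \dim (A i) = \dim (B i)) ->
  (df A B <= \sum_(i < r) 2 * minn (\dim (A i)) (\dim {:L} - \dim (A i)))%N.
Proof. by move=> dimAB; apply: leq_sum => i _; apply: dS_leq. Qed.

Lemma OrbP Fl b C : C \in Orb Fl b -> exists j, C = flagmul Fl (b ^+ j).
Proof. by case/mapP=> j _ ->; exists j. Qed.

Lemma mem_Orb Fl b j : (j < morder b)%N -> flagmul Fl (b ^+ j) \in Orb Fl b.
Proof. by move=> lt_j_b; apply/mapP; exists j; rewrite ?mem_iota. Qed.

Lemma morder_gt1 b : b != 1 -> (1 < morder b)%N.
Proof.
rewrite /morder; have : (0 < #|F| ^ \dim {:L})%N.
  by rewrite expn_gt0; apply/orP; left; apply/card_gt0P; exists 0.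
by case: (_ ^ _)%N => [|N] //= _; rewrite expr1 => /negbTE->.
Qed.

End Flags.

Lemma foldr_minn_mem (x0 : nat) s : foldr minn x0 s \in x0 :: s.
Proof.
elim: s => [|a s IHs] /=; first by rewrite mem_head.
rewrite /minn; case: ifP => _; first by rewrite !inE eqxx orbT.
by move: IHs; rewrite !inE => /orP[]->; rewrite ?orbT.
Qed.

Lemma foldr_minn_leq (x0 : nat) s y : y \in s -> (foldr minn x0 s <= y)%N.
Proof.
elim: s => [|a s IHs] //=; rewrite inE => /orP[/eqP->|/IHs]; first exact: geq_minl.
exact: leq_trans (geq_minr _ _).
Qed.

Section MinimumDistance.
Variables (F : finFieldType) (L : fieldExtType F) (r : nat).
Implicit Types (C : seq (flag L r)).

Lemma mem_mindist_pairs C A B : A \in C -> B \in C -> A != B ->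
  df A B \in [seq df p.1 p.2 | p <- [seq (x, y) | x <- C, y <- C] & p.1 != p.2].
Proof.
move=> AC BC AB; apply/mapP; exists (A, B) => //.
by rewrite mem_filter AB; apply/allpairsP; exists (A, B).
Qed.

Lemma mindist_leq C A B : A \in C -> B \in C -> A != B -> (mindist C <= df A B)%N.
Proof. by move=> AC BC AB; apply/foldr_minn_leq/mem_mindist_pairs. Qed.

Lemma mindist_attained C A B : A \in C -> B \in C -> A != B ->
  exists A' B', [/\ A' \in C, B' \in C, A' != B' & mindist C = df A' B'].
Proof.
move=> AC BC AB; rewrite /mindist.
set D := map _ _; have D_nil : D != [::].
  by apply/negP => /eqP D_nil; have := mem_mindist_pairs AC BC AB; rewrite -/D D_nil.
have [x xD ->] : exists2 x, x \in D & foldr minn (head 0%N D) D = x.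
  case: D D_nil => [|a D] //= _; exists (minn a (foldr minn a D)) => //.
  by rewrite /minn; case: ifP => _; rewrite ?mem_head ?foldr_minn_mem.
case/mapP: xD => -[A' B'] /[!mem_filter] /andP[/= A'B' /allpairsP].
by case=> -[A1 B1] [/= A1C B1C [eA eB]] ->; subst; exists A1, B1.
Qed.

Lemma mindist_eq0 C : {in C &, forall A B, A = B} -> mindist C = 0%N.
Proof.
move=> C_trivial; rewrite /mindist (@eq_in_filter _ _ pred0) ?filter_pred0 //.
by move=> _ /allpairsP[[A B] [AC BC ->]] /=; rewrite (C_trivial A B) ?eqxx.
Qed.

End MinimumDistance.

Section Orbit.
Variables (F : finFieldType) (L : fieldExtType F) (r : nat).
Variables (Fl : flag L r) (K : {subfield L}) (b : L).
Hypotheses (KFl : friend Fl K) (b0 : b != 0).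

Lemma friend_Orb C : C \in Orb Fl b -> friend C K.
Proof. by case/OrbP=> j ->; apply: friend_flagmul. Qed.

Lemma dim_Orb C i : C \in Orb Fl b -> \dim (C i) = \dim (Fl i).
Proof. by case/OrbP=> j ->; rewrite dim_flagmul ?expf_neq0. Qed.

Lemma mindist_Orb_eq0 : b \in K -> mindist (Orb Fl b) = 0%N.
Proof.
move=> bK; apply: mindist_eq0 => _ _ /OrbP[i ->] /OrbP[j ->].
by rewrite !(flagmul_id KFl) ?rpredX ?expf_neq0.
Qed.

Lemma Orb_mem0 : b != 1 -> Fl \in Orb Fl b.
Proof.
move=> b1; have := @mem_Orb _ _ _ Fl b 0 (ltnW (morder_gt1 b1)).
by rewrite expr0 (flagmul_id KFl) ?mem1v ?oner_neq0.
Qed.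

Lemma Orb_mem1 : b != 1 -> flagmul Fl b \in Orb Fl b.
Proof. by move=> b1; have := mem_Orb Fl (morder_gt1 b1); rewrite expr1. Qed.

Section NontrivialOrbit.
Hypotheses (bfK : best_friend Fl K) (bNK : b \notin K).

Let bN1 : b != 1. Proof. by apply: contraNneq bNK => ->; rewrite mem1v. Qed.

Lemma Orb_neq : Fl != flagmul Fl b.
Proof. by apply: contra bNK => /eqP/esym; apply: best_friend_mem. Qed.

Lemma dvdn_mindist_Orb : (2 * \dim K %| mindist (Orb Fl b))%N.
Proof.
have [A [B [AO BO _ ->]]] := mindist_attained (Orb_mem0 bN1) (Orb_mem1 bN1) Orb_neq.
by apply: dvdn_df (friend_Orb AO) (friend_Orb BO) _ => i; rewrite !dim_Orb.
Qed.

Lemma mindist_Orb_gt0 : (0 < mindist (Orb Fl b))%N.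
Proof.
have [A [B [_ _ AB ->]]] := mindist_attained (Orb_mem0 bN1) (Orb_mem1 bN1) Orb_neq.
by rewrite lt0n; apply: contra AB => /eqP/df_eq0->.
Qed.

Lemma mindist_Orb_leq :
  (mindist (Orb Fl b) <= \sum_(i < r) 2 * minn (\dim (Fl i)) (\dim {:L} - \dim (Fl i)))%N.
Proof.
apply: leq_trans (mindist_leq (Orb_mem0 bN1) (Orb_mem1 bN1) Orb_neq) _.
by apply: df_leq => i; rewrite dim_flagmul.
Qed.

End NontrivialOrbit.

End Orbit.

Unset Implicit Arguments.
Set Strict Implicit.

Theorem proposition4p4 (F : finFieldType) (L : fieldExtType F)
    (m : nat) (K : {subfield L}) (r : nat) (sv : 'I_r -> nat)
    (Fl : flag L r) (b : L) :
  let n := \dim {:L} in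
  let s := (n %/ m)%N in
  (m %| n)%N ->
  \dim K = m ->
  (forall i : 'I_r, (1 <= sv i < s)%N) ->
  (forall i j : 'I_r, (i < j)%N -> (sv i < sv j)%N) ->
  is_flag_of_type Fl (fun i => (m * sv i)%N) ->
  best_friend Fl K ->
  b != 0 ->
  (mindist (Orb Fl b) = 0%N <-> b \in K) /\
  (b \notin K ->
     let d := mindist (Orb Fl b) in
     [/\ (2 * m %| d)%N, (2 * m <= d)%N &
         (d <= 2 * m * \sum_(i < r) (if (sv i <= s %/ 2)%N then sv i else s - sv i))%N]).
Proof.
move=> n s m_dvd_n dimK _ _ [dimFl _ _ _] bfK b0.
have KFl := bfK.1.
split=> [|bNK d].
  split=> [d0|]; last exact: mindist_Orb_eq0.
  by apply/negPn/negP=> bNK; have := mindist_Orb_gt0 KFl bfK bNK; rewrite d0.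
have dvd_d : (2 * m %| d)%N by rewrite -dimK dvdn_mindist_Orb.
split=> //; first by rewrite dvdn_leq ?(mindist_Orb_gt0 KFl bfK bNK).
apply: leq_trans (mindist_Orb_leq KFl b0 bfK bNK) _.
rewrite big_distrr leq_sum // => i _.
(* [big_distrr] leaves the product folded as a monoid law; a global [/=]
   would also try to evaluate [\dim fullv]. *)
rewrite [X in (_ <= X)%N]/= dimFl -mulnA leq_pmul2l //.
have n_ms : n = (m * s)%N by rewrite mulnC divnK.
case: ifP => _; first exact: geq_minl.
by rewrite mulnBr -n_ms /n; apply: geq_minr.
Qed.
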